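(* In a finite dynamic game as described in the context, if $K^i$ is unilaterally sufficient information for player $i$, then for every behavioral strategy profile $g^{-i}$ of the players other than $i$, $K^i$ is an information state under $g^{-i}$ for the payoffs of all players $\mathcal{I}$: there exist functions $P_t^{i,g^{-i}}:\mathcal{K}_t^i\times\mathcal{U}_t^i\to\Delta(\mathcal{K}_{t+1}^i)$ and $r_t^{j,g^{-i}}:\mathcal{K}_t^i\times\mathcal{U}_t^i\to[-1,1]$ ($j\in\mathcal{I}$), not depending on $g^i$, such that $\Pr^{g^i,g^{-i}}(k_{t+1}^i\mid h_t^i,u_t^i)=P_t^{i,g^{-i}}(k_{t+1}^i\mid k_t^i,u_t^i)$ for all $t<T$ and $\mathbb{E}^{g^i,g^{-i}}[R_t^j\mid h_t^i,u_t^i]=r_t^{j,g^{-i}}(k_t^i,u_t^i)$ for all $j\in\mathcal{I}$ and all $t$, for all behavioral strategies $g^i$ and all $(h_t^i,u_t^i)$ admissible under $(g^i,g^{-i})$.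
   Context: Game model: finite set of players $\mathcal{I}$, times $\mathcal{T}=\{1,\dots,T\}$. At time $t$ each player $i$ takes action $U_t^i\in\mathcal{U}_t^i$, obtains reward $R_t^i\in[-1,1]$ and learns new information $Z_t^i\in\mathcal{Z}_t^i$. There is a state $X_t\in\mathcal{X}_t$ with $(X_{t+1},Z_t,R_t)=f_t(X_t,U_t,W_t)$ for fixed functions $f_t$. Primitive random variables $(X_1,H_1)$ and $W_1,\dots,W_T$ are mutually independent with commonly known distributions. All sets are finite. Perfect recall: $H_t^i=(H_1^i,Z_{1:t-1}^i)\in\mathcal{H}_t^i$, and $U_t^i$ is a component of $Z_t^i$. Behavioral strategy $g_t^i:\mathcal{H}_t^i\to\Delta(\mathcal{U}_t^i)$. A realization is admissible under a (partial) profile if it has positive probability under some completion of it. Compression: $K_1^i=\iota_1^i(H_1^i)$, $K_t^i=\iota_t^i(K_{t-1}^i,Z_{t-1}^i)$ for fixed maps, finite value sets $\mathcal{K}_t^i$; $k_t^i$ is the compression of $h_t^i$. Unilaterally sufficient information (USI): $K^i$ is USI for player $i$ if there exist $F_t^{i,g^i}:\mathcal{K}_t^i\to\Delta(\mathcal{H}_t^i)$ depending only on $g^i$ and $\Phi_t^{i,g^{-i}}:\mathcal{K}_t^i\to\Delta(\mathcal{X}_t\times\mathcal{H}_t^{-i})$ depending only on $g^{-i}$ with $\Pr^g(x_t,h_t\mid k_t^i)=F_t^{i,g^i}(h_t^i\mid k_t^i)\Phi_t^{i,g^{-i}}(x_t,h_t^{-i}\mid k_t^i)$ for all behavioral profiles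 $g$, all $t$, all $k_t^i$ admissible under $g$ (with $x_t,h_t^i,h_t^{-i}$ ranging independently; the left side is $0$ if they disagree on shared components). *)

(* Finite dynamic games with behavioral strategies,
   probabilities valued in an arbitrary real field R. Times are 0-indexed:
   paper time t in {1..T} corresponds to index t-1 in {0..T-1}. *)
From mathcomp Require Import all_boot all_order all_algebra.
Set Implicit Arguments. Unset Strict Implicit. Unset Printing Implicit Defensive.
Import Order.TTheory GRing.Theory Num.Theory.
Local Open Scope ring_scope.

Definition is_distr (R : realFieldType) (A : finType) (p : A -> R) : Prop :=
  (forall a, 0 <= p a) /\ \sum_(a : A) p a = 1.

Fixpoint Hist (H1 : finType) (Z : nat -> finType) (t : nat) : finType :=
  match t with 0 => H1 | t'.+1 => (Hist H1 Z t' * Z t')%type end.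

Record game (R : realFieldType) := Game {
  Pl : finType;
  T : nat;
  X : nat -> finType;
  U : Pl -> nat -> finType;
  Z : Pl -> nat -> finType;
  W : nat -> finType;
  H1 : Pl -> finType;
  (* (X_{t+1}, Z_t, R_t) = f_t(X_t, U_t, W_t) *)
  f : forall t, X t -> {dffun forall i, U i t} -> W t ->
        X t.+1 * {dffun forall i, Z i t} * (Pl -> R);
  (* U_t^i is a component of Z_t^i *)
  actZ : forall (i : Pl) (t : nat), Z i t -> U i t;
  actZ_f : forall t (x : X t) (u : {dffun forall i, U i t}) (w : W t) (i : Pl), actZ ((f x u w).1.2 i) = u i;
  rew_bound : forall t (x : X t) (u : {dffun forall i, U i t}) (w : W t) (i : Pl), (t < T)%N ->
     -1 <= (f x u w).2 i <= 1;
  (* distributions of the mutually independent primitive r.v.s *)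
  P0 : X 0 -> {dffun forall i, H1 i} -> R;
  P0_distr : (forall x h, 0 <= P0 x h) /\ \sum_x \sum_h P0 x h = 1;
  PW : forall t, W t -> R;
  PW_distr : forall t, (t < T)%N -> is_distr (@PW t)
}.

Section Game.
Variables (R : realFieldType) (G : game R).

Definition HistP (i : Pl G) (t : nat) : finType := Hist (H1 i) (Z i) t.

Definition strat (i : Pl G) := forall t, HistP i t -> U i t -> R.
Definition valid_strat (i : Pl G) (gi : strat i) : Prop :=
  forall t (h : HistP i t), (t < T G)%N -> is_distr (gi t h).
Definition profile := forall i : Pl G, strat i.

Definition JHist (t : nat) := {dffun forall j : Pl G, HistP j t}.

Definition ext_hist t (h : JHist t) (z : {dffun forall i, Z i t}) : JHist t.+1 :=
  [ffun j => ((h j, z j) : HistP j t.+1)].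

Fixpoint mu (g : profile) (t : nat) : X G t -> JHist t -> R :=
  match t return X G t -> JHist t -> R with
  | 0 => fun x h => P0 x h
  | t'.+1 => fun x' h' =>
      \sum_(x : X G t') \sum_(h : JHist t') \sum_(u : {dffun forall j, U j t'})
       \sum_(w : W G t')
        mu g x h * (\prod_(j : Pl G) g j t' (h j) (u j)) * PW w *
        ((((f x u w).1.1 == x') && (ext_hist h (f x u w).1.2 == h'))%:R)
  end.

Definition Et (g : profile) (t : nat)
  (phi : X G t -> JHist t -> {dffun forall j, U j t} -> W G t -> R) : R :=
  \sum_(x : X G t) \sum_(h : JHist t) \sum_(u : {dffun forall j, U j t})
   \sum_(w : W G t)
    mu g x h * (\prod_(j : Pl G) g j t (h j) (u j)) * PW w * phi x h u w.

Definition pr_hu g i t (hi : HistP i t) (ui : U i t) : R :=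
  @Et g t (fun x h u w => ((h i == hi) && (u i == ui))%:R).

Definition admissible_hu g i t (hi : HistP i t) (ui : U i t) : Prop :=
  0 < pr_hu g hi ui.

Definition upd (g : profile) (i : Pl G) (gi : strat i) : profile := dfwith g gi.

End Game.

Record compression (R : realFieldType) (G : game R) (i : Pl G) := Compression {
  K : nat -> finType;
  iota1 : H1 i -> K 0;
  iota : forall t, K t -> Z i t -> K t.+1
}.

Section Compr.
Variables (R : realFieldType) (G : game R) (i : Pl G) (C : compression i).

Fixpoint compr (t : nat) : HistP i t -> K C t :=
  match t return HistP i t -> K C t with
  | 0 => fun h => @iota1 R G i C h
  | t'.+1 => fun h => @iota R G i C t' (compr h.1) h.2
  end.

Definition pr_k (g : profile G) t (k : K C t) : R :=
  \sum_(x : X G t) \sum_(h : JHist G t) mu g x h * (compr (h i) == k)%:R.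

Definition cond_xh (g : profile G) t (k : K C t) (x : X G t) (h : JHist G t) : R :=
  mu g x h * (compr (h i) == k)%:R / pr_k g k.

Definition OHist t := {dffun forall j : {j : Pl G | j != i}, HistP (val j) t}.
Definition restr t (h : JHist G t) : OHist t := [ffun j => h (val j)].

Definition USI : Prop :=
  exists (F : strat i -> forall t, K C t -> HistP i t -> R)
         (Phi : profile G -> forall t, K C t -> (X G t * OHist t)%type -> R),
    (* Phi depends only on g^{-i} (F depends only on g^i by its type) *)
    (forall g g' : profile G, (forall j, j != i -> g j = g' j) -> Phi g = Phi g') /\
    (forall (gi : strat i) t k, valid_strat gi -> (t < T G)%N -> is_distr (F gi t k)) /\
    (forall (g : profile G) t k, (forall j, j != i -> valid_strat (g j)) ->
        (t < T G)%N -> is_distr (Phi g t k)) /\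
    (forall g : profile G, (forall j, valid_strat (g j)) ->
      forall t (k : K C t), (t < T G)%N -> 0 < pr_k g k ->
      forall (x : X G t) (h : JHist G t),
        cond_xh g k x h = F (g i) t k (h i) * Phi g t k (x, restr h)).

Definition cond_next (g : profile G) t (hi : HistP i t) (ui : U i t) (k' : K C t.+1) : R :=
  @Et R G g t (fun x h u w => [&& h i == hi, u i == ui &
            compr ((ext_hist h (f x u w).1.2) i) == k']%:R) / pr_hu g hi ui.

Definition cond_rew (g : profile G) (j : Pl G) t (hi : HistP i t) (ui : U i t) : R :=
  @Et R G g t (fun x h u w => ((h i == hi) && (u i == ui))%:R * (f x u w).2 j)
    / pr_hu g hi ui.
End Compr.

From Pilot Require Import Defs.
From mathcomp Require Import all_boot all_order all_algebra.
From mathcomp Require Import ring.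

Import Order.TTheory GRing.Theory Num.Theory.
Local Open Scope ring_scope.

(* Under USI, the joint law of (X_t, H_t) restricted to H_t^i = h^i factors as
   Pr(k) F(h^i | k) Phi(X_t, H_t^{-i} | k) with k = k_t^i, and given also
   U_t^i = u^i the other players act by g^{-i}(. | H_t^{-i}) while W_t is
   independent of everything.  After dividing by Pr(h^i, u^i), which carries the
   same factor Pr(k) F(h^i | k) g^i(u^i | h^i), the conditional law of
   (X_t, H_t^{-i}, U_t, W_t) given (h^i, u^i) depends only on (k, u^i) and g^{-i}.
   Both K_{t+1}^i = iota_t(k, Z_t^i) and R_t are functions of k and these
   variables, so their conditional law and expectation are expectations under
   this law. *)

Section DependentProducts.
Local Set Implicit Arguments.
Local Unset Strict Implicit.
Variables (I : finType) (T_ : I -> finType).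

Lemma big_dffun_distr (R : comNzRingType) (c : forall j, T_ j -> R) :
  \sum_(u : {dffun forall j, T_ j}) \prod_j c j (u j) = \prod_j \sum_(v : T_ j) c j v.
Proof.
rewrite (reindex (@dffun_of_fprod I T_)); last exact/onW_bij/dffun_of_fprod_bij.
pose P_ j := [ffun v : T_ j => c j v].
transitivity (\sum_(t : fprod T_) \prod_(j in I) P_ j (t j)).
  by apply: eq_bigr => t _; apply: eq_bigr => j _; rewrite !ffunE.
rewrite big_fprod -(bigA_distr_big_dep (tagged_with T_) (fun j => untag 0 (P_ j))).
apply: eq_bigr => j _; rewrite -(big_tag P_ j).
by apply: eq_bigr => v _; rewrite ffunE.
Qed.

Variable i : I.

Definition dfdrop (u : {dffun forall j, T_ j}) : {dffun forall j : {j | j != i}, T_ (val j)} :=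
  [ffun j => u (val j)].

(* The inverse of [u |-> (u i, dfdrop u)]. *)
Definition dfjoin (a : T_ i) (b : {dffun forall j : {j | j != i}, T_ (val j)}) :
    {dffun forall j, T_ j} :=
  [ffun j => match j != i as c return (j != i) = c -> T_ j with
             | true => fun ji => b (exist _ j ji)
             | false => fun ji => ecast k (T_ k) (esym (eqP (negbFE ji))) a
             end erefl].

Lemma dfjoin_at a b : dfjoin a b i = a.
Proof.
rewrite ffunE; move: (erefl (i != i)); rewrite {2 3}eqxx => ii /=.
by rewrite (eq_axiomK (esym (eqP (negbFE ii)))).
Qed.

Lemma dfjoin_val a b (j : {j | j != i}) : dfjoin a b (val j) = b j.
Proof.
case: j => j ji; rewrite ffunE /=; move: (erefl (j != i)); rewrite {2 3}ji => ji' /=.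
by rewrite (bool_irrelevance ji' ji).
Qed.

Lemma dfjoinK a : cancel (dfjoin a) dfdrop.
Proof. by move=> b; apply/ffunP => j; rewrite ffunE dfjoin_val. Qed.

Lemma dfdropK (u : {dffun forall j, T_ j}) : dfjoin (u i) (dfdrop u) = u.
Proof.
apply/ffunP => j; rewrite ffunE; move: (erefl (j != i)).
case: {2 3}(j != i) => ji /=; first by rewrite ffunE.
by move: (esym _); case: j / {ji}.
Qed.

Lemma big_dfjoin (R : nmodType) (F : {dffun forall j, T_ j} -> R) a :
  \sum_(u : {dffun forall j, T_ j} | u i == a) F u = \sum_b F (dfjoin a b).
Proof.
rewrite (reindex_onto (dfjoin a) dfdrop) => [|u /eqP <-]; last exact: dfdropK.
by apply: eq_bigl => b; rewrite dfjoin_at dfjoinK !eqxx.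
Qed.

End DependentProducts.

Section Profiles.
Context {R : realFieldType} {G : game R}.

Lemma valid_upd {g : profile G} {i} {gi : strat i} :
  (forall j, j != i -> valid_strat (g j)) -> valid_strat gi ->
  forall j, valid_strat ((upd g gi : profile G) j).
Proof.
move=> g_valid gi_valid j; case: (eqVneq i j) => [<-|ij]; first by rewrite /upd dfwith_in.
by rewrite /upd dfwith_out //; apply: g_valid; rewrite eq_sym.
Qed.

Context {g : profile G}.
Hypothesis g_valid : forall j, valid_strat (g j).

Lemma mu_ge0 t : (t <= T G)%N -> forall x h, 0 <= mu g (t := t) x h.
Proof.
elim: t => [|t IH] tT x h /=; first by case: (P0_distr G) => ->.
apply: sumr_ge0 => x0 _; apply: sumr_ge0 => h0 _.
apply: sumr_ge0 => u _; apply: sumr_ge0 => w _; rewrite !mulr_ge0 ?IH 1?ltnW //.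
- by apply: prodr_ge0 => j _; case: (g_valid j t (h0 j) tT).
- by case: (PW_distr tT).
Qed.

Lemma Et_ext t (phi1 phi2 : X G t -> JHist G t -> {dffun forall j, U j t} -> W G t -> R) :
  (forall x h u w, phi1 x h u w = phi2 x h u w) -> Et g phi1 = Et g phi2.
Proof. by move=> E; do 4![apply: eq_bigr => ? _]; rewrite E. Qed.

Lemma pr_k_gt0 {i} (C : compression i) {t} {hi : HistP i t} {ui : U i t} : (t < T G)%N ->
  admissible_hu g hi ui -> 0 < pr_k (C := C) g (compr C hi).
Proof.
move=> tT; apply: contraTT; rewrite -leNgt /admissible_hu => pr_k_le0.
have term_ge0 x (h : JHist G t) : 0 <= mu g x h * (compr C (h i) == compr C hi)%:R.
  by rewrite mulr_ge0 ?mu_ge0 1?ltnW.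
have pr_k0 : pr_k g (compr C hi) = 0.
  by apply/eqP; rewrite eq_le pr_k_le0 sumr_ge0 // => x _; rewrite sumr_ge0.
have mu0 x (h : JHist G t) : h i = hi -> mu g x h = 0.
  move=> hhi; have sum_h0 := psumr_eq0P
    (fun x _ => sumr_ge0 _ (fun h _ => term_ge0 x h)) pr_k0 (i := x) isT.
  by have := psumr_eq0P (fun h _ => term_ge0 x h) sum_h0 (i := h) isT; rewrite hhi eqxx mulr1.
suff -> : pr_hu g hi ui = 0 by rewrite ltxx.
rewrite /pr_hu; do 4![apply: big1 => ? _].
by case: (eqVneq (_ i) hi) => [/mu0->|]; rewrite ?mul0r //= mulr0.
Qed.

End Profiles.

Section UnilateralSufficiency.
Context {R : realFieldType} {G : game R} {i : Pl G} {C : compression i}.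
Context {F : strat i -> forall t, K C t -> HistP i t -> R}
        {Phi : profile G -> forall t, K C t -> (X G t * OHist i t)%type -> R}.
Hypothesis Phi_indep :
  forall g g' : profile G, (forall j, j != i -> g j = g' j) -> Phi g = Phi g'.
Hypothesis Phi_distr : forall (g : profile G) t k, (forall j, j != i -> valid_strat (g j)) ->
  (t < T G)%N -> is_distr (Phi g t k).
Hypothesis USI_factor : forall g : profile G, (forall j, valid_strat (g j)) ->
  forall t (k : K C t), (t < T G)%N -> 0 < pr_k g k ->
  forall (x : X G t) (h : JHist G t),
    cond_xh g k x h = F (g i) t k (h i) * Phi g t k (x, restr i h).

Context {g : profile G}.
Hypothesis g_valid : forall j, j != i -> valid_strat (g j).

Definition pr_others {t} (ho : OHist i t) (u : {dffun forall j, U j t}) : R :=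
  \prod_(j : {j | j != i}) g (val j) t (ho j) (u (val j)).

(* The expectation of [psi (X_t, H_t^{-i}, U_t, W_t)] given [U_t^i = ui] when
   (X_t, H_t^{-i}) has law [Phi g k]: by [Et_cond] below it is the conditional
   expectation given any admissible (h^i, u^i) with [compr C hi = k]. *)
Definition Ek {t} (k : K C t) (ui : U i t)
    (psi : X G t -> OHist i t -> {dffun forall j, U j t} -> W G t -> R) : R :=
  \sum_x \sum_ho \sum_(u : {dffun forall j, U j t}) \sum_w
    Phi g t k (x, ho) * ((u i == ui)%:R * pr_others ho u) * PW w * psi x ho u w.

Lemma pr_others_ge0 t ho u : (t < T G)%N -> 0 <= pr_others (t := t) ho u.
Proof. by move=> tT; apply: prodr_ge0 => j _; case: (g_valid _ (valP j) t (ho j) tT). Qed.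

Lemma sum_pr_others t (ho : OHist i t) ui : (t < T G)%N ->
  \sum_(u : {dffun forall j, U j t}) (u i == ui)%:R * pr_others ho u = 1.
Proof.
move=> tT; under eq_bigr do rewrite mulr_natl mulrb.
rewrite -big_mkcond (big_dfjoin (T_ := fun j => U j t)) /pr_others.
under eq_bigr do under eq_bigr do rewrite (dfjoin_val (T_ := fun j => U j t)).
rewrite (big_dffun_distr (fun j v => g (val j) t (ho j) v)).
by apply: big1 => j _; case: (g_valid _ (valP j) t (ho j) tT).
Qed.

Lemma Ek_ext t k ui psi1 psi2 : (forall x ho u w, psi1 x ho u w = psi2 x ho u w) ->
  @Ek t k ui psi1 = Ek k ui psi2.
Proof. by move=> E; do 4![apply: eq_bigr => ? _]; rewrite E. Qed.

Lemma Ek_cst t k ui (c : R) : (t < T G)%N -> @Ek t k ui (fun _ _ _ _ => c) = c.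
Proof.
move=> tT; have [_ sum_PW] := PW_distr tT; have [_ sum_Phi] := Phi_distr g t k g_valid tT.
transitivity (\sum_x \sum_ho Phi g t k (x, ho) * c).
  apply: eq_bigr => x _; apply: eq_bigr => ho _.
  under eq_bigr do rewrite -mulr_suml -mulr_sumr sum_PW mulr1.
  by rewrite -mulr_suml -mulr_sumr sum_pr_others // mulr1.
rewrite pair_bigA -mulr_suml -[RHS]mul1r -sum_Phi; congr (_ * _).
by apply: eq_bigr => -[].
Qed.

Lemma Ek_bounded t k ui (a b : R) psi : (t < T G)%N ->
  (forall x ho u w, a <= psi x ho u w <= b) -> a <= @Ek t k ui psi <= b.
Proof.
move=> tT psi_ab.
have [PW_ge0 _] := PW_distr tT; have [Phi_ge0 _] := Phi_distr g t k g_valid tT.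
have ler_Ek psi1 psi2 : (forall x ho u w, psi1 x ho u w <= psi2 x ho u w) ->
    Ek k ui psi1 <= Ek k ui psi2.
  move=> le_psi; do 4![apply: ler_sum => ? _].
  by rewrite ler_wpM2l // !mulr_ge0 ?pr_others_ge0.
rewrite -[a](Ek_cst t k ui a tT) -[b](Ek_cst t k ui b tT).
by rewrite !ler_Ek // => x ho u w; case/andP: (psi_ab x ho u w).
Qed.

Lemma Ek_sum t k ui (A : finType) psi :
  \sum_(a : A) @Ek t k ui (psi a) = Ek k ui (fun x ho u w => \sum_a psi a x ho u w).
Proof.
rewrite exchange_big; apply: eq_bigr => x _; rewrite exchange_big; apply: eq_bigr => ho _.
rewrite exchange_big; apply: eq_bigr => u _; rewrite exchange_big; apply: eq_bigr => w _.
by rewrite mulr_sumr.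
Qed.

Definition next_kernel t (k : K C t) (ui : U i t) (k' : K C t.+1) : R :=
  Ek k ui (fun x _ u w => (Defs.iota k ((f x u w).1.2 i) == k')%:R).

Definition exp_reward (j : Pl G) t (k : K C t) (ui : U i t) : R :=
  Ek k ui (fun x _ u w => (f x u w).2 j).

Lemma next_kernel_distr t k ui : (t.+1 < T G)%N -> is_distr (next_kernel t k ui).
Proof.
move=> tT; split=> [k'|].
  suff /andP[] : 0 <= next_kernel t k ui k' <= 1 by [].
  by apply: Ek_bounded (ltnW tT) _ => x ho u w; rewrite ler0n lern1 leq_b1.
rewrite Ek_sum -[RHS](Ek_cst t k ui 1 (ltnW tT)); apply: Ek_ext => x ho u w.
rewrite (bigD1 (Defs.iota k ((f x u w).1.2 i))) //= eqxx big1 ?addr0 // => k' k'_ne.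
by rewrite eq_sym (negPf k'_ne).
Qed.

Lemma exp_reward_bound j t k ui : (t < T G)%N -> -1 <= exp_reward j t k ui <= 1.
Proof. by move=> tT; apply: Ek_bounded => // x ho u w; apply: rew_bound. Qed.

Context {gi : strat i}.
Hypothesis gi_valid : valid_strat gi.

Lemma Phi_upd : Phi (upd g gi) = Phi g.
Proof. by apply: Phi_indep => j ji; rewrite /upd dfwith_out // eq_sym. Qed.

Lemma prod_upd t (h : JHist G t) (u : {dffun forall j, U j t}) :
  \prod_j (upd g gi : profile G) j t (h j) (u j) = gi t (h i) (u i) * pr_others (restr i h) u.
Proof.
rewrite (bigD1 i) //= (big_sub (predC1 i)) /upd dfwith_in; congr (_ * _).
apply: eq_bigr => j _; rewrite /restr ffunE dfwith_out // eq_sym; exact: valP j.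
Qed.

Lemma mu_upd t (tT : (t < T G)%N) (hi : HistP i t)
    (pk_gt0 : 0 < pr_k (upd g gi) (compr C hi)) x (ho : OHist i t) :
  mu (upd g gi) x (dfjoin hi ho : JHist G t)
  = pr_k (upd g gi) (compr C hi) * F gi t (compr C hi) hi * Phi g t (compr C hi) (x, ho).
Proof.
have := USI_factor _ (valid_upd g_valid gi_valid) t _ tT pk_gt0 x (dfjoin hi ho).
rewrite /cond_xh Phi_upd /upd dfwith_in (dfjoin_at (T_ := fun j => HistP j t)) eqxx mulr1.
have -> : restr i (dfjoin hi ho : JHist G t) = ho.
  exact: (dfjoinK (T_ := fun j => HistP j t)).
by move/(canRL (divfK (lt0r_neq0 pk_gt0))) => ->; rewrite mulrC mulrA.
Qed.

Lemma Et_factor t (tT : (t < T G)%N) (hi : HistP i t) (ui : U i t)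
    (pk_gt0 : 0 < pr_k (upd g gi) (compr C hi)) psi :
  Et (upd g gi) (fun x h u w => ((h i == hi) && (u i == ui))%:R * psi x (restr i h) u w)
  = pr_k (upd g gi) (compr C hi) * F gi t (compr C hi) hi * gi t hi ui * Ek (compr C hi) ui psi.
Proof.
rewrite /Et /Ek !mulr_sumr; apply: eq_bigr => x _.
rewrite (bigID (fun h : JHist G t => h i == hi)) /= [X in _ + X]big1 ?addr0; last first.
  by move=> h /negbTE hi'; do 2![apply: big1 => ? _]; rewrite hi' mul0r mulr0.
rewrite (big_dfjoin (T_ := fun j => HistP j t)) mulr_sumr; apply: eq_bigr => ho _.
rewrite mulr_sumr; apply: eq_bigr => u _; rewrite mulr_sumr; apply: eq_bigr => w _.
rewrite mu_upd // prod_upd (dfjoin_at (T_ := fun j => HistP j t)).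
rewrite [restr i _](dfjoinK (T_ := fun j => HistP j t)) eqxx /=.
by case: eqP => [->|_] /=; ring.
Qed.

Lemma Et_cond t (tT : (t < T G)%N) (hi : HistP i t) (ui : U i t)
    (adm : admissible_hu (upd g gi) hi ui) psi :
  Et (upd g gi) (fun x h u w => ((h i == hi) && (u i == ui))%:R * psi x (restr i h) u w)
    / pr_hu (upd g gi) hi ui = Ek (compr C hi) ui psi.
Proof.
have pk_gt0 := pr_k_gt0 (valid_upd g_valid gi_valid) C tT adm.
have pr_hu_eq : pr_hu (upd g gi) hi ui
    = pr_k (upd g gi) (compr C hi) * F gi t (compr C hi) hi * gi t hi ui.
  have := Et_factor t tT hi ui pk_gt0 (fun _ _ _ _ => 1).
  rewrite Ek_cst // mulr1 => <-.
  by apply: Et_ext => x h u w; rewrite mulr1.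
by rewrite Et_factor // -pr_hu_eq mulrC mulKf // lt0r_neq0.
Qed.

Lemma cond_next_eq t hi ui k' : (t.+1 < T G)%N -> admissible_hu (upd g gi) hi ui ->
  cond_next (upd g gi) hi ui k' = next_kernel t (compr C hi) ui k'.
Proof.
move=> tT adm; rewrite /cond_next /next_kernel -(Et_cond t (ltnW tT) hi ui adm).
congr (_ / _).
apply: Et_ext => x h u w; rewrite /ext_hist ffunE /=.
by case: eqP => [->|_]; rewrite ?mul0r // /=; case: (u i == ui); rewrite ?mul1r ?mul0r.
Qed.

Lemma cond_rew_eq j t hi ui : (t < T G)%N -> admissible_hu (upd g gi) hi ui ->
  cond_rew (upd g gi) j hi ui = exp_reward j t (compr C hi) ui.
Proof. by move=> tT adm; exact: (Et_cond t tT hi ui adm (fun x _ u w => (f x u w).2 j)). Qed.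

End UnilateralSufficiency.

Theorem lemma4 (R : realFieldType) (G : game R) (i : Pl G)
    (C : compression i) :
  USI C ->
  forall g : profile G, (forall j, j != i -> valid_strat (g j)) ->
  exists (P : forall t, K C t -> U i t -> K C t.+1 -> R)
         (r : Pl G -> forall t, K C t -> U i t -> R),
    (forall t k u, (t.+1 < T G)%N -> is_distr (P t k u)) /\
    (forall j t k u, (t < T G)%N -> -1 <= r j t k u <= 1) /\
    forall gi : strat i, valid_strat gi ->
      (forall t (hi : HistP i t) (ui : U i t) (k' : K C t.+1),
         (t.+1 < T G)%N -> admissible_hu (upd g gi) hi ui ->
         cond_next (C:=C) (upd g gi) hi ui k' = P t (compr C hi) ui k') /\
      (forall (j : Pl G) t (hi : HistP i t) (ui : U i t),
         (t < T G)%N -> admissible_hu (upd g gi) hi ui ->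
         cond_rew (upd g gi) j hi ui = r j t (compr C hi) ui).
Proof.
move=> [F [Phi [Phi_indep [_ [Phi_distr USI_factor]]]]] g g_valid.
exists (next_kernel (Phi := Phi) (g := g)), (exp_reward (Phi := Phi) (g := g)).
split; first exact: (next_kernel_distr Phi_distr g_valid).
split; first exact: (exp_reward_bound Phi_distr g_valid).
move=> gi gi_valid; split.
- exact: (cond_next_eq Phi_indep Phi_distr USI_factor g_valid gi_valid).
- exact: (cond_rew_eq Phi_indep Phi_distr USI_factor g_valid gi_valid).
Qed.
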